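(* Let $q=p^r$ with $p$ prime, $p\ne 2$, $p\ne 3$. Let $$f_2(x_1,x_2)=t\bigl(x_1^{q-2}+x_2^{q-2}\bigr).$$ Then the polynomial $t\bigl(f_2(x_1,x_2)+x_3^{q-2}\bigr)\in\mathbb{F}_q[x_1,x_2,x_3]$, reduced modulo $x_j^q-x_j$, has degree $3(q-2)$.
   Context: $\mathbb{F}_q$ is the finite field with $q$ elements, and $$t(x)=x+\sum_{k=0}^{q-2}x^k\in\mathbb{F}_q[x];$$ this polynomial swaps $0$ and $1$ and fixes every other element. Degree means the total degree of the reduced representative (degree $<q$ in each variable). *)

From HB Require Import structures.
From mathcomp Require Import all_boot all_order all_algebra all_field.
From mathcomp Require Import mpoly.
Set Implicit Arguments. Unset Strict Implicit. Unset Printing Implicit Defensive.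
Import GRing.Theory.
Local Open Scope ring_scope.

Section Defs.
Variables (F : finFieldType) (n : nat).

Definition tpoly (g : {mpoly F[n]}) : {mpoly F[n]} :=
  g + \sum_(k < (#|F|).-1) g ^+ k.

(* Reduction of an exponent modulo x^q - x : x^0 = 1, and for e >= 1,
   x^e == x^(((e-1) mod (q-1)) + 1), which has exponent in 1..q-1. *)
Definition red_exp (e : nat) : nat :=
  if e == 0%N then 0%N else (((e.-1) %% (#|F|).-1).+1)%N.

Definition red_mnm (m : 'X_{1..n}) : 'X_{1..n} :=
  [multinom red_exp (m i) | i < n].

(* The reduced representative modulo the ideal (x_j^q - x_j)_j :
   each monomial is replaced by its reduced monomial (degree < q in each var). *)
Definition reduce (P : {mpoly F[n]}) : {mpoly F[n]} :=
  \sum_(m <- msupp P) P@_m *: 'X_[red_mnm m].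

Definition tdeg (P : {mpoly F[n]}) : nat := (msize P).-1.

End Defs.

(* Over F = F_q, x^(q-2) = 1/x (with 1/0 = 0), so the polynomial computes
   g(x, y, z) = t(t(1/x + 1/y) + 1/z).  The coefficient of x^a y^b z^c
   (a, b, c <= q - 1) in the reduced representative of any polynomial is
   recovered from its values by pairing with the dual basis of the monomials
   (dual_coef, mcoeff_reduce_dual); for exponents >= 1 it is, up to sign,
   the moment \sum g(x,y,z) x^(q-1-a) y^(q-1-b) z^(q-1-c).
   - Upper bound: a reduced monomial of degree > 3(q-2) has all exponents
     >= 1 and one equal to q - 1; the corresponding moment has a zero
     exponent, and summing over that variable leaves a factor \sum_x x^d = 0.
   - Leading term: the moment of exponents (1,1,1) equals -6, computed from
     explicit sums of inverses over F, so the coefficient of (x1 x2 x3)^(q-2)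
     is 6, which is nonzero since p <> 2, 3.
   The file develops power sums over F, the coefficient formula in n
   variables, the function t and sums of inverses, the moments, and finally
   the three-variable computation and the theorem. *)

From HB Require Import structures.
From mathcomp Require Import all_boot all_order all_algebra all_field.
From mathcomp Require Import mpoly.
From mathcomp Require Import zify ring.
Import GRing.Theory.
Local Open Scope ring_scope.
Set Implicit Arguments. Unset Strict Implicit. Unset Printing Implicit Defensive.

Section FiniteFieldSums.
Variable F : finFieldType.
Local Notation q := #|F|.

Lemma sum_shift (c : F) (f : F -> F) : \sum_x f (c + x) = \sum_x f x.
Proof. by rewrite [RHS](reindex_inj (addrI c)). Qed.

Lemma sum_shiftN (c : F) (f : F -> F) : \sum_x f (c - x) = \sum_x f x.
Proof.
have subc_inj : injective (fun x : F => c - x) by move=> u w /addrI /oppr_inj.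
by rewrite [RHS](reindex_inj subc_inj).
Qed.

Lemma sum_inv (f : F -> F) : \sum_x f x^-1 = \sum_x f x.
Proof. by rewrite [RHS](reindex_inj invr_inj). Qed.

(* The characteristic divides q: comparing \sum_x (1 + x) with \sum_x x. *)
Lemma card_finField_eq0 : q%:R = 0 :> F.
Proof.
have := sum_shift 1 id; rewrite big_split /= sumr_const => /eqP.
by rewrite -subr_eq0 addrK => /eqP.
Qed.

Lemma card_gt1 : (1 < q)%N. Proof. exact: finNzRing_gt1. Qed.

Lemma card_pred_gt0 : (0 < q.-1)%N. Proof. by move: card_gt1; case: q => [|[]]. Qed.

Lemma expf_card_pred (x : F) : x != 0 -> x ^+ q.-1 = 1.
Proof.
move=> x0; apply: (mulfI x0); rewrite mulr1 -exprS prednK ?expf_card //.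
exact: ltnW card_gt1.
Qed.

Lemma expf_addn_card_pred (x : F) e : (0 < e)%N -> x ^+ (e + q.-1) = x ^+ e.
Proof.
move=> e0; have [->|x0] := eqVneq x 0; first by rewrite !expr0n addn_eq0 (gtn_eqF e0).
by rewrite exprD expf_card_pred // mulr1.
Qed.

Lemma expf_card_sub2 (x : F) : (2 < q)%N -> x ^+ (q - 2) = x^-1.
Proof.
move=> q_gt2; have [->|x0] := eqVneq x 0.
  by rewrite invr0 expr0n subn_eq0 leqNgt q_gt2.
apply: (mulfI x0); rewrite divff // -exprS (_ : (q - 2).+1 = q.-1); last by lia.
exact: expf_card_pred.
Qed.

Lemma sum_pow_card_pred : \sum_(x : F) x ^+ q.-1 = -1.
Proof.
rewrite (bigD1 0) //= expr0n gtn_eqF ?card_pred_gt0 // add0r.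
rewrite (eq_bigr (fun _ => 1)) => [|x /expf_card_pred //].
rewrite sumr_const cardC1; apply/eqP; rewrite -addr_eq0 -(natrD _ _ 1) addn1.
by rewrite prednK ?card_finField_eq0 // ltnW ?card_gt1.
Qed.

(* For 0 < j < q - 1 some l <> 0 has l^j <> 1 (x^j = 1 has at most j roots),
   and the substitution x |-> l x multiplies the sum by l^j. *)
Lemma sum_pow j : (j < q.-1)%N -> \sum_(x : F) x ^+ j = 0.
Proof.
case: j => [_|j hj]; first by rewrite (eq_bigr (fun _ => 1)) // sumr_const card_finField_eq0.
have [l l0 lj] : exists2 l : F, l != 0 & l ^+ j.+1 != 1.
  apply/exists_inP; rewrite -negb_forall_in; apply/negP => /forall_inP all_roots.
  suff : (q.-1 <= j.+1)%N by rewrite leqNgt hj.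
  rewrite -(cardC1 (0 : F)) cardE; apply: max_unity_roots (enum_uniq _) => //.
  by apply/allP => x; rewrite mem_enum unity_rootE => /all_roots.
have : \sum_(x : F) x ^+ j.+1 = l ^+ j.+1 * \sum_(x : F) x ^+ j.+1.
  rewrite {1}(reindex_inj (mulfI l0)) /= mulr_sumr.
  by apply: eq_bigr => x _; rewrite exprMn.
move/eqP; rewrite -subr_eq0 -{1}[\sum_x _]mul1r -mulrBl mulf_eq0 subr_eq0.
by rewrite eq_sym (negbTE lj) => /eqP.
Qed.

(* The functions dual_pow k (k <= q - 1) form the basis of F -> F dual to the
   monomials x^j (j <= q - 1) for the pairing (f, g) |-> \sum_x f x * g x. *)
Definition dual_pow (k : nat) (x : F) : F :=
  if k == 0%N then 1 - x ^+ q.-1 else - x ^+ (q.-1 - k).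

Lemma sum_pow_dual j k : (j <= q.-1)%N -> (k <= q.-1)%N ->
  \sum_(x : F) x ^+ j * dual_pow k x = (j == k)%:R.
Proof.
move=> hj hk; rewrite /dual_pow; case: eqP => [->|/eqP k0].
  under eq_bigr => x _ do rewrite mulrBr mulr1 -exprD.
  rewrite sumrB; case: j hj => [|j] hj.
    by rewrite add0n sum_pow_card_pred sum_pow ?card_pred_gt0 // sub0r opprK.
  under [X in _ - X]eq_bigr => x _ do rewrite expf_addn_card_pred //.
  by rewrite subrr.
under eq_bigr => x _ do rewrite mulrN -exprD.
rewrite sumrN; case: (ltngtP j k) => hjk.
- by rewrite sum_pow ?oppr0 //; move: card_pred_gt0 k0; rewrite -lt0n; lia.
- rewrite (_ : (j + (q.-1 - k) = (j - k) + q.-1)%N); last by lia.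
  under eq_bigr => x _ do rewrite expf_addn_card_pred ?subn_gt0 //.
  by rewrite sum_pow ?oppr0 //; move: k0; rewrite -lt0n; lia.
- by rewrite hjk subnKC // sum_pow_card_pred opprK.
Qed.

End FiniteFieldSums.

Section Reduction.
Variables (F : finFieldType) (n : nat).
Local Notation q := #|F|.

Lemma red_exp_le e : (red_exp F e <= q.-1)%N.
Proof. by rewrite /red_exp; case: eqP => // _; rewrite ltn_mod card_pred_gt0. Qed.

Lemma expf_red_exp (x : F) e : x ^+ red_exp F e = x ^+ e.
Proof.
rewrite /red_exp; case: e => [//|e] /=.
rewrite {2}(divn_eq e q.-1) -addnS.
elim: (e %/ q.-1)%N => [|k IH]; first by rewrite mul0n add0n.
by rewrite mulSn -addnA addnC expf_addn_card_pred // addn_gt0 orbT.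
Qed.

Lemma red_mnmE (m : 'X_{1..n}) i : red_mnm F m i = red_exp F (m i).
Proof. by rewrite mnmE. Qed.

Lemma meval_reduce (P : {mpoly F[n]}) v : (reduce P).@[v] = P.@[v].
Proof.
rewrite /reduce raddf_sum /= [RHS]mevalE; apply: eq_bigr => m _.
rewrite mevalZ mevalX; congr (_ * _); apply: eq_bigr => i _.
by rewrite red_mnmE expf_red_exp.
Qed.

Lemma mcoeff_reduce (P : {mpoly F[n]}) m :
  (reduce P)@_m = \sum_(m' <- msupp P) P@_m' * (red_mnm F m' == m)%:R.
Proof. by rewrite /reduce raddf_sum /=; apply: eq_bigr => m' _; rewrite mcoeffZ mcoeffX. Qed.

Lemma reduce_exp_le (P : {mpoly F[n]}) m :
  m \in msupp (reduce P) -> forall i, (m i <= q.-1)%N.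
Proof.
move=> hm i; rewrite leqNgt; apply/negP => hi; move: hm.
rewrite mcoeff_msupp mcoeff_reduce big1_seq ?eqxx // => m' _.
case: eqP => [red_m'|]; last by rewrite mulr0.
by move: hi; rewrite -red_m' red_mnmE ltnNge red_exp_le.
Qed.

Definition dual_coef (m : 'X_{1..n}) (Q : {mpoly F[n]}) : F :=
  \sum_(v : {ffun 'I_n -> F}) Q.@[v] * \prod_i dual_pow (m i) (v i).

(* On monomials of degree <= q - 1 in each variable, dual_coef m is the
   Kronecker delta at m: the sum over F^n factors into one-variable pairings. *)
Lemma dual_coef_X (m mu : 'X_{1..n}) :
  (forall i, m i <= q.-1)%N -> (forall i, mu i <= q.-1)%N ->
  dual_coef m 'X_[mu] = (mu == m)%:R.
Proof.
move=> hm hmu; rewrite /dual_coef.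
under eq_bigr => v _ do rewrite mevalX -big_split /=.
rewrite -(bigA_distr_bigA (fun i x => x ^+ mu i * dual_pow (m i) x)) /=.
under eq_bigr => i _ do rewrite sum_pow_dual //.
have [->|neq] := eqVneq mu m; first by rewrite big1 // => i _; rewrite eqxx.
have [i hi] : exists i, mu i != m i.
  apply/existsP; rewrite -negb_forall; apply: contra neq => /forallP eq_mu.
  by apply/eqP/mnmP => i; apply/eqP.
by rewrite (bigD1 i) //= (negbTE hi) mul0r.
Qed.

Lemma mcoeff_reduce_dual (P : {mpoly F[n]}) (m : 'X_{1..n}) : (forall i, m i <= q.-1)%N ->
  (reduce P)@_m = dual_coef m P.
Proof.
move=> hm; rewrite mcoeff_reduce /dual_coef.
under [RHS]eq_bigr => v _ do rewrite -meval_reduce /reduce raddf_sum big_distrl /=.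
rewrite exchange_big /=; apply: eq_bigr => m' _.
rewrite -dual_coef_X // => [|i]; last by rewrite red_mnmE red_exp_le.
rewrite /dual_coef big_distrr /=; apply: eq_bigr => v _.
by rewrite mevalZ mulrA.
Qed.

End Reduction.

Section SwapZeroOne.
Variable F : finFieldType.
Local Notation q := #|F|.

(* The function x |-> t(x) on F; by Fermat it swaps 0 and 1 and fixes the rest. *)
Definition tF (w : F) : F := w + \sum_(k < q.-1) w ^+ k.

(* The three cases: t(0) = 1 and t(1) = 0 since q = 0 in F, and t(w) = w
   otherwise since w^(q-1) = 1 makes the geometric sum vanish. *)
Lemma tF0 : tF 0 = 1.
Proof.
rewrite /tF add0r -(prednK (card_pred_gt0 F)) big_ord_recl expr0 big1 ?addr0 //.
by move=> i _; rewrite expr0n.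
Qed.

Lemma tF1 : tF 1 = 0.
Proof.
rewrite /tF (eq_bigr (fun _ => 1)) => [|i _]; last by rewrite expr1n.
rewrite sumr_const card_ord -[1 in LHS]mulr1n -mulrnDr add1n.
by rewrite prednK ?card_finField_eq0 // ltnW ?card_gt1.
Qed.

Lemma tFE w : w != 0 -> w != 1 -> tF w = w.
Proof.
move=> w0 w1; rewrite /tF.
suff -> : \sum_(k < q.-1) w ^+ k = 0 by rewrite addr0.
have : (w - 1) * \sum_(k < q.-1) w ^+ k = 0.
  by rewrite -subrX1 expf_card_pred // subrr.
by move/eqP; rewrite mulf_eq0 subr_eq0 (negbTE w1) => /eqP.
Qed.

Lemma tF_indicator w : tF w = w + (w == 0)%:R - (w == 1)%:R.
Proof.
have [->|w0] := eqVneq w 0; first by rewrite tF0 eq_sym oner_eq0 subr0 add0r.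
have [->|w1] := eqVneq w 1; first by rewrite tF1 addr0 subrr.
by rewrite tFE // addr0 subr0.
Qed.

Lemma tF_inv_sym s : (tF s)^-1 + (1 - tF s)^-1 = s^-1 + (1 - s)^-1.
Proof.
have [->|s0] := eqVneq s 0; first by rewrite tF0 subrr subr0 invr0 invr1 addr0 add0r.
have [->|s1] := eqVneq s 1; first by rewrite tF1 subrr subr0 invr0 invr1 addr0 add0r.
by rewrite tFE.
Qed.

Lemma meval_tpoly n (g : {mpoly F[n]}) v : (tpoly g).@[v] = tF g.@[v].
Proof.
rewrite /tpoly /tF rmorphD rmorph_sum /=; congr (_ + _).
by apply: eq_bigr => k _; rewrite rmorphXn.
Qed.

End SwapZeroOne.

Section InverseSums.
Variable F : finFieldType.
Local Notation q := #|F|.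
Hypothesis card_ge5 : (5 <= q)%N.

(* Explicit sums of rational functions of the inverses over F; q >= 5 makes
   the power sums \sum_x x^-j vanish for j <= 3. *)
Lemma card_pred_gt3 : (3 < q.-1)%N.
Proof. by move: card_ge5; case: q => [|[|[|[|[|k]]]]]. Qed.

Lemma sum_invX j : (j < q.-1)%N -> \sum_(x : F) x^-1 ^+ j = 0.
Proof. by move=> hj; rewrite (sum_inv (fun x => x ^+ j)) sum_pow. Qed.

Lemma sum_inv1 : \sum_(x : F) x^-1 = 0.
Proof.
rewrite -[RHS](@sum_invX 1); last by apply: leq_trans card_pred_gt3.
by apply: eq_bigr => x _; rewrite expr1.
Qed.

Lemma sum_delta (c k : F) : \sum_x k * (x == c)%:R = k.
Proof.
rewrite (bigD1 c) //= eqxx mulr1 big1 ?addr0 // => x /negbTE ->.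
by rewrite mulr0.
Qed.

Lemma delta_swap (f : F -> F) c a : f c * (c == a)%:R = f a * (c == a)%:R.
Proof. by have [->|_] := eqVneq c a; rewrite ?mulr0. Qed.

Lemma mulVf_pow (c : F) : c^-1 * c = c ^+ q.-1.
Proof.
have [->|c0] := eqVneq c 0; first by rewrite invr0 mul0r expr0n gtn_eqF ?card_pred_gt0.
by rewrite mulVf // expf_card_pred.
Qed.

(* \sum_c c^-1 t(s + c) = -1 - s^-1 - (1 - s)^-1: write t as the identity
   corrected at the two points c = -s and c = 1 - s. *)
Lemma sum_inv_mul_tF (s : F) : \sum_c c^-1 * tF (s + c) = -1 - s^-1 - (1 - s)^-1.
Proof.
have split_tF c : c^-1 * tF (s + c) = s * c^-1 + c ^+ q.-1 +
   ((- s)^-1 * (c == - s)%:R - (1 - s)^-1 * (c == 1 - s)%:R).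
  rewrite tF_indicator.
  have -> : (s + c == 0) = (c == - s) by rewrite addrC addr_eq0.
  have -> : (s + c == 1) = (c == 1 - s) by rewrite addrC -subr_eq opprK.
  rewrite -(delta_swap GRing.inv c (- s)) -(delta_swap GRing.inv c (1 - s)).
  rewrite -mulVf_pow; ring.
rewrite (eq_bigr _ (fun c _ => split_tF c)) !big_split /= sumrN !sum_delta.
by rewrite -big_distrr /= sum_inv1 sum_pow_card_pred invrN; ring.
Qed.

(* Homogeneity (b = a t) reduces this to \sum_a a^-3 = 0. *)
Lemma sum_inv_hom : \sum_(a : F) \sum_(b : F) a^-1 * b^-1 * (a + b)^-1 = 0.
Proof.
pose K := \sum_(t : F) t^-1 * (1 + t)^-1.
have scale a : \sum_(b : F) a^-1 * b^-1 * (a + b)^-1 = a^-1 ^+ 3 * K.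
  have [->|a0] := eqVneq a 0.
    by rewrite invr0 expr0n mul0r big1 // => b _; rewrite !mul0r.
  rewrite (reindex_inj (mulfI a0)) /= /K big_distrr /=; apply: eq_bigr => t _.
  by rewrite (_ : a + a * t = a * (1 + t)) ?invfM; ring.
rewrite (eq_bigr _ (fun a _ => scale a)) -big_distrl /= sum_invX ?mul0r //.
exact: leq_trans card_pred_gt3.
Qed.

(* Partial fractions: 1 / (b (c - b)) = (1/b + 1/(c - b)) / c for b <> 0, c. *)
Lemma sum_inv_pair c : \sum_(b : F) b^-1 * (c - b)^-1 = - 2%:R * (c^-1 * c^-1).
Proof.
have [->|c0] := eqVneq c 0.
  rewrite invr0 !mulr0 -[RHS]oppr0 -[X in _ = - X](@sum_invX 2).
    by rewrite -sumrN; apply: eq_bigr => b _; rewrite sub0r invrN; ring.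
  exact: leq_trans card_pred_gt3.
have pfrac b : b^-1 * (c - b)^-1 = c^-1 * b^-1 + c^-1 * (c - b)^-1
   - c^-1 * c^-1 * (b == 0)%:R - c^-1 * c^-1 * (b == c)%:R.
  have [->|b0] := eqVneq b 0; first by rewrite eq_sym (negbTE c0) invr0 subr0 /=; ring.
  have [->|bc] := eqVneq b c; first by rewrite subrr invr0 /=; ring.
  have cb : c - b != 0 by rewrite subr_eq0 eq_sym.
  by rewrite /=; field; rewrite c0 b0 cb.
rewrite (eq_bigr _ (fun b _ => pfrac b)) !sumrB !big_split /= !sum_delta -!big_distrr /=.
by rewrite (sum_shiftN c GRing.inv) sum_inv1; ring.
Qed.

(* Partial fractions in a, the poles 0 and 1 being handled by deltas. *)
Lemma sum_inv_sq_compl : \sum_(a : F) a^-1 * ((1 - a)^-1 * (1 - a)^-1) = - 3%:R.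
Proof.
have pfrac (a : F) : a^-1 * ((1 - a)^-1 * (1 - a)^-1) = a^-1 + (1 - a)^-1 +
   (1 - a)^-1 * (1 - a)^-1 - 2%:R * (a == 0)%:R - 1 * (a == 1)%:R.
  have [->|a0] := eqVneq a 0; first by rewrite eq_sym oner_eq0 invr0 subr0 invr1 /=; ring.
  have [->|a1] := eqVneq a 1; first by rewrite subrr invr0 invr1 /=; ring.
  have ca : 1 - a != 0 by rewrite subr_eq0 eq_sym.
  by rewrite /=; field; rewrite a0 ca.
rewrite (eq_bigr _ (fun a _ => pfrac a)) !sumrB !big_split /= !sum_delta.
rewrite (sum_shiftN 1 GRing.inv) (sum_shiftN 1 (fun x => x^-1 * x^-1)) sum_inv1.
rewrite (eq_bigr (fun x => x^-1 ^+ 2)) ?sum_invX; last by move=> x _; rewrite expr2.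
  by ring.
exact: leq_trans card_pred_gt3.
Qed.

(* The inner sum over b is sum_inv_pair at c = 1 - a, then sum_inv_sq_compl. *)
Lemma sum_inv_aff : \sum_(a : F) \sum_(b : F) a^-1 * b^-1 * (1 - (a + b))^-1 = 6%:R.
Proof.
have inner a : \sum_(b : F) a^-1 * b^-1 * (1 - (a + b))^-1 =
               a^-1 * (- 2%:R * ((1 - a)^-1 * (1 - a)^-1)).
  rewrite -sum_inv_pair big_distrr /=; apply: eq_bigr => b _.
  by rewrite opprD addrA; ring.
rewrite (eq_bigr _ (fun a _ => inner a)).
under eq_bigr => a _ do rewrite mulrCA.
by rewrite -big_distrr /= sum_inv_sq_compl; ring.
Qed.

End InverseSums.

Section Moments.
Variable F : finFieldType.
Local Notation q := #|F|.

Definition nest (G : F -> F) (x y z : F) : F := G (G (x^-1 + y^-1) + z^-1).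

Definition moment (G : F -> F) (d0 d1 d2 : nat) : F :=
  \sum_x \sum_y \sum_z nest G x y z * (x ^+ d0 * y ^+ d1 * z ^+ d2).

(* A moment vanishes when the exponent of z is 0: summing over z first
   gives \sum_w G w, independent of x, and then \sum_x x^d0 = 0. *)
Lemma moment_z0 G d0 d1 : (d0 < q.-1)%N -> moment G d0 d1 0 = 0.
Proof.
move=> hd0; rewrite /moment.
have sum_z x y : \sum_z nest G x y z * (x ^+ d0 * y ^+ d1 * z ^+ 0) =
                 x ^+ d0 * (y ^+ d1 * \sum_w G w).
  under eq_bigr => z _ do rewrite expr0 mulr1.
  rewrite -big_distrl /= mulrC mulrA; congr (_ * _).
  by rewrite /nest (sum_inv (fun w => G (G (x^-1 + y^-1) + w))) (sum_shift _ G).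
under eq_bigr => x _ do under eq_bigr => y _ do rewrite sum_z.
under eq_bigr => x _ do rewrite -big_distrr /=.
by rewrite -big_distrl /= sum_pow // mul0r.
Qed.

(* Likewise when the exponent of x is 0: summing over x removes the
   dependence on y, and \sum_y y^d1 = 0. *)
Lemma moment_x0 G d1 d2 : (d1 < q.-1)%N -> moment G 0 d1 d2 = 0.
Proof.
move=> hd1; rewrite /moment exchange_big /=.
under eq_bigr => y _ do rewrite exchange_big /=.
have sum_x y z : \sum_x nest G x y z * (x ^+ 0 * y ^+ d1 * z ^+ d2) =
                 y ^+ d1 * (z ^+ d2 * \sum_w G (G w + z^-1)).
  under eq_bigr => x _ do rewrite expr0 mul1r.
  rewrite -big_distrl /= [RHS]mulrA [RHS]mulrC; congr (_ * _).
  rewrite /nest (sum_inv (fun w => G (G (w + y^-1) + z^-1))).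
  rewrite -(sum_shift (y^-1) (fun w => G (G w + z^-1))).
  by apply: eq_bigr => x _; rewrite [x + _]addrC.
under eq_bigr => y _ do under eq_bigr => z _ do rewrite sum_x.
under eq_bigr => y _ do rewrite -big_distrr /=.
by rewrite -big_distrl /= sum_pow // mul0r.
Qed.

(* The roles of x and y are symmetric. *)
Lemma moment_y0 G d0 d2 : (d0 < q.-1)%N -> moment G d0 0 d2 = 0.
Proof.
move=> hd0; rewrite /moment exchange_big /= -[RHS](moment_x0 G d2 hd0).
apply: eq_bigr => y _; apply: eq_bigr => x _; apply: eq_bigr => z _.
by rewrite /nest [x^-1 + _]addrC [y ^+ 0 * _]mulrC.
Qed.

(* The moment of exponents (1, 1, 1) for G = t: substituting x, y, z by their
   inverses, the z-sum is given by sum_inv_mul_tF, the inner t disappears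
   by tF_inv_sym, and the remaining double sums are sum_inv_hom and sum_inv_aff. *)
Lemma moment_tF_111 : (5 <= q)%N -> moment (@tF F) 1 1 1 = - 6%:R.
Proof.
move=> card_ge5; rewrite /moment (reindex_inj invr_inj) /=.
under eq_bigr => x _ do rewrite (reindex_inj invr_inj) /=.
under eq_bigr => x _ do under eq_bigr => y _ do rewrite (reindex_inj invr_inj) /=.
have sum_z x y : \sum_z nest (@tF F) x^-1 y^-1 z^-1 * (x^-1 ^+ 1 * y^-1 ^+ 1 * z^-1 ^+ 1) =
   - (x^-1 * y^-1) - x^-1 * y^-1 * (x + y)^-1 - x^-1 * y^-1 * (1 - (x + y))^-1.
  have -> : - (x^-1 * y^-1) - x^-1 * y^-1 * (x + y)^-1 - x^-1 * y^-1 * (1 - (x + y))^-1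
          = x^-1 * y^-1 * (-1 - (tF (x + y))^-1 - (1 - tF (x + y))^-1).
    rewrite (_ : -1 - _ - _ = -1 - ((tF (x + y))^-1 + (1 - tF (x + y))^-1)).
      by rewrite tF_inv_sym; ring.
    by ring.
  rewrite -(sum_inv_mul_tF card_ge5) big_distrr /=; apply: eq_bigr => z _.
  by rewrite /nest !invrK; ring.
under eq_bigr => x _ do under eq_bigr => y _ do rewrite sum_z.
under eq_bigr => x _ do rewrite !sumrB sumrN -big_distrr /= sum_inv1 // mulr0 oppr0 sub0r.
by rewrite sumrB sumrN sum_inv_hom // sum_inv_aff //; ring.
Qed.

End Moments.

Section ThreeVariables.
Variable F : finFieldType.

Definition v3 (x y z : F) : {ffun 'I_3 -> F} := [ffun i : 'I_3 => nth 0 [:: x; y; z] i].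

Lemma v3_0 x y z : v3 x y z (inord 0) = x. Proof. by rewrite ffunE inordK. Qed.
Lemma v3_1 x y z : v3 x y z (inord 1) = y. Proof. by rewrite ffunE inordK. Qed.
Lemma v3_2 x y z : v3 x y z (inord 2) = z. Proof. by rewrite ffunE inordK. Qed.

Lemma ord3_inord (i : 'I_3) : [\/ i = inord 0, i = inord 1 | i = inord 2].
Proof.
case: i => [[|[|[|//]]] hi]; [apply: Or31 | apply: Or32 | apply: Or33];
  by apply/val_inj; rewrite /= inordK.
Qed.

Lemma sum_ffun3 (h : {ffun 'I_3 -> F} -> F) :
  \sum_v h v = \sum_x \sum_y \sum_z h (v3 x y z).
Proof.
under [RHS]eq_bigr => x _ do rewrite pair_bigA /=.
rewrite pair_bigA /= (reindex (fun t : F * (F * F) => v3 t.1 t.2.1 t.2.2)) //.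
exists (fun v : {ffun 'I_3 -> F} => (v (inord 0), (v (inord 1), v (inord 2)))) => [[x [y z]] _|v _].
  by rewrite v3_0 v3_1 v3_2.
by apply/ffunP => i; case: (ord3_inord i) => ->; rewrite ?v3_0 ?v3_1 ?v3_2.
Qed.

Lemma prod3 (f : 'I_3 -> F) :
  \prod_(i < 3) f i = f (inord 0) * f (inord 1) * f (inord 2).
Proof.
rewrite !big_ord_recl big_ord0 mulr1 mulrA.
by congr (f _ * f _ * f _); apply/val_inj; rewrite /= inordK.
Qed.

Lemma mdeg3 (m : 'X_{1..3}) : mdeg m = (m (inord 0) + m (inord 1) + m (inord 2))%N.
Proof.
rewrite mdegE !big_ord_recl big_ord0 addn0 addnA.
by congr (m _ + m _ + m _)%N; apply/val_inj; rewrite /= inordK.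
Qed.

Lemma dual_coef3 (Q : {mpoly F[3]}) (m : 'X_{1..3}) : dual_coef m Q =
  \sum_x \sum_y \sum_z Q.@[v3 x y z] *
    (dual_pow (m (inord 0)) x * dual_pow (m (inord 1)) y * dual_pow (m (inord 2)) z).
Proof.
rewrite /dual_coef sum_ffun3.
by under eq_bigr => x _ do under eq_bigr => y _ do under eq_bigr => z _ do
  rewrite prod3 v3_0 v3_1 v3_2.
Qed.

End ThreeVariables.

Lemma tdeg_eq (F : finFieldType) n (P : {mpoly F[n]}) (m0 : 'X_{1..n}) :
  m0 \in msupp P -> (forall m, m \in msupp P -> mdeg m <= mdeg m0)%N ->
  tdeg P = mdeg m0.
Proof.
move=> m0_supp deg_le; rewrite /tdeg.
suff -> : msize P = (mdeg m0).+1 by [].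
apply/eqP; rewrite eqn_leq msize_mdeg_lt // andbT msizeE.
by apply/bigmax_leqP_seq => m m_supp _; rewrite ltnS deg_le.
Qed.

Lemma card_ge5_natr6_neq0 (F : finFieldType) p r :
  prime p -> p != 2%N -> p != 3%N -> #|F| = (p ^ r)%N ->
  (5 <= #|F|)%N /\ 6%:R != 0 :> F.
Proof.
move=> p_prime p_neq2 p_neq3 card_F.
have p_ge5 : (5 <= p)%N.
  by clear card_F; move: p_prime p_neq2 p_neq3; case: p => [|[|[|[|[|k]]]]].
have r_gt0 : (0 < r)%N.
  by rewrite lt0n; apply: contraTneq (card_gt1 F) => r0; rewrite card_F r0 expn0.
split.
  rewrite card_F -(prednK r_gt0) expnS; apply: leq_trans p_ge5 _.
  by apply: leq_pmulr; rewrite expn_gt0 prime_gt0.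
rewrite -(dvdn_pcharf (card_finPcharP card_F p_prime)); apply/negP => p_dvd6.
have := dvdn_leq (isT : (0 < 6)%N) p_dvd6; clear card_F.
by move: p_prime p_neq2 p_neq3 p_dvd6 p_ge5; case: p => [|[|[|[|[|[|[|k]]]]]]].
Qed.

Section Theorem15.
Variable F : finFieldType.
Local Notation q := #|F|.
Hypothesis card_ge5 : (5 <= q)%N.

Definition t_poly3 : {mpoly F[3]} :=
  tpoly (tpoly ('X_(inord 0) ^+ (q - 2) + 'X_(inord 1) ^+ (q - 2)) + 'X_(inord 2) ^+ (q - 2)).

Lemma meval_t_poly3 x y z : t_poly3.@[v3 x y z] = nest (@tF F) x y z.
Proof.
rewrite /t_poly3 meval_tpoly rmorphD /= meval_tpoly !rmorphD !rmorphXn /= !mevalXU.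
by rewrite v3_0 v3_1 v3_2 !expf_card_sub2 // (leq_trans _ card_ge5).
Qed.

Lemma mcoeff_t_poly3 (m : 'X_{1..3}) :
  (forall i, 0 < m i <= q.-1)%N ->
  (reduce t_poly3)@_m = - moment (@tF F) (q.-1 - m (inord 0)) (q.-1 - m (inord 1)) (q.-1 - m (inord 2)).
Proof.
move=> m_range; rewrite mcoeff_reduce_dual => [|i]; last by case/andP: (m_range i).
have dual_m i (x : F) : dual_pow (m i) x = - x ^+ (q.-1 - m i).
  by rewrite /dual_pow; case/andP: (m_range i) => /gtn_eqF -> _.
rewrite dual_coef3 /moment -!sumrN; apply: eq_bigr => x _.
rewrite -sumrN; apply: eq_bigr => y _; rewrite -sumrN; apply: eq_bigr => z _.
by rewrite meval_t_poly3 !dual_m; ring.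
Qed.

Lemma mcoeff_t_poly3_top : (reduce t_poly3)@_[multinom (q - 2)%N | i < 3] = 6%:R.
Proof.
rewrite mcoeff_t_poly3 => [|i]; last by rewrite mnmE; apply/andP; split; lia.
rewrite !mnmE (_ : (q.-1 - (q - 2) = 1)%N); last by lia.
by rewrite moment_tF_111 // opprK.
Qed.

(* No reduced monomial of degree > 3(q-2) survives: such a monomial has all
   exponents >= 1 and one of them equal to q - 1, so its moment vanishes. *)
Lemma mdeg_reduce_t_poly3 m : m \in msupp (reduce t_poly3) -> (mdeg m <= 3 * (q - 2))%N.
Proof.
move=> m_supp; have m_le := reduce_exp_le m_supp.
rewrite leqNgt mdeg3; apply/negP => deg_gt; move: m_supp.
have m_range i : (0 < m i <= q.-1)%N.
  rewrite m_le andbT; case: (ord3_inord i) => ->;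
  by move: (m_le (inord 0)) (m_le (inord 1)) (m_le (inord 2)); lia.
rewrite mcoeff_msupp mcoeff_t_poly3 // oppr_eq0 => /negP; apply; apply/eqP.
move: (m_range (inord 0)) (m_range (inord 1)) (m_range (inord 2)).
move: (m (inord 0)) (m (inord 1)) (m (inord 2)) deg_gt => a b c deg_gt ha hb hc.
have [a_top|a_lt] := eqVneq a q.-1; first by rewrite a_top subnn moment_x0 //; lia.
have [b_top|b_lt] := eqVneq b q.-1; first by rewrite b_top subnn moment_y0 //; lia.
have c_top : c = q.-1 by lia.
by rewrite c_top subnn moment_z0 //; lia.
Qed.

End Theorem15.

Unset Implicit Arguments.
Theorem mainTheorem15 (F : finFieldType) (p r : nat) :
  prime p -> p != 2%N -> p != 3%N -> #|F| = (p ^ r)%N ->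
  let q := #|F| in
  let x1 : {mpoly F[3]} := 'X_(inord 0) in
  let x2 : {mpoly F[3]} := 'X_(inord 1) in
  let x3 : {mpoly F[3]} := 'X_(inord 2) in
  let f2 := tpoly (x1 ^+ (q - 2) + x2 ^+ (q - 2)) in
  let P := reduce (tpoly (f2 + x3 ^+ (q - 2))) in
  P != 0 /\ tdeg P = (3 * (q - 2))%N.
Proof.
move=> p_prime p_neq2 p_neq3 card_F q x1 x2 x3 f2 P.
have [card_ge5 six_neq0] := card_ge5_natr6_neq0 p_prime p_neq2 p_neq3 card_F.
change (reduce (t_poly3 F) != 0 /\ tdeg (reduce (t_poly3 F)) = (3 * (q - 2))%N).
pose top : 'X_{1..3} := [multinom (q - 2)%N | i < 3].
have top_supp : top \in msupp (reduce (t_poly3 F)).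
  by rewrite mcoeff_msupp mcoeff_t_poly3_top.
have top_deg : mdeg top = (3 * (q - 2))%N by rewrite mdeg3 !mnmE; lia.
split; first by apply: contraTneq top_supp => ->; rewrite msupp0.
by rewrite (tdeg_eq top_supp) // top_deg; apply: mdeg_reduce_t_poly3.
Qed.
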